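(* Let $k\ge 2$ be an integer and let $\mathcal{M}_k:(1,+\infty)^k\to\mathbb{R}$ be defined by $$\mathcal{M}_k(x_1,\ldots,x_k)=\int_{[0,1]^{k-1}} (x_1-1)^{t_1}(x_2-1)^{t_2}\cdots(x_{k-1}-1)^{t_{k-1}}(x_k-1)^{1-(t_1+\cdots+t_{k-1})}\,dt_1\cdots dt_{k-1}.$$ Then for all $x_1,\ldots,x_k\in(1,+\infty)$ with $x_i\neq x_k$ for $i=1,\ldots,k-1$, $$\mathcal{M}_k(x_1,\ldots,x_k)=\frac{(x_1-x_k)(x_2-x_k)\cdots(x_{k-1}-x_k)}{(x_k-1)^{k-2}\log\left(\frac{x_1-1}{x_k-1}\right)\cdots\log\left(\frac{x_{k-1}-1}{x_k-1}\right)}.$$ *)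

From Stdlib Require Import Reals.
From Coquelicot Require Import Coquelicot.
Open Scope R_scope.

Fixpoint prodR (n : nat) (f : nat -> R) : R :=
  match n with
  | O => 1
  | S m => prodR m f * f (S m)
  end.

Fixpoint sumR (n : nat) (f : nat -> R) : R :=
  match n with
  | O => 0
  | S m => sumR m f + f (S m)
  end.

(* iter_RInt n F = integral of F over the cube [0,1]^n in the coordinates
   t 1, ..., t n (as an iterated Riemann integral; other coordinates 0). *)
Fixpoint iter_RInt (n : nat) (F : (nat -> R) -> R) : R :=
  match n with
  | O => F (fun _ => 0)
  | S m => RInt (fun s =>
             iter_RInt m (fun t => F (fun i => if Nat.eqb i (S m) then s else t i)))
             0 1
  end.

Definition Mk (k : nat) (x : nat -> R) : R :=
  iter_RInt (k - 1) (fun t =>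
    prodR (k - 1) (fun i => Rpower (x i - 1) (t i)) *
    Rpower (x k - 1) (1 - sumR (k - 1) t)).

From Stdlib Require Import Reals Lra Lia FunctionalExtensionality.
From Coquelicot Require Import Coquelicot.
Open Scope R_scope.

(* With [c = x_k - 1] and [a_i = (x_i - 1) / c], the integrand factors as
   [c * prod_i a_i ^ t_i].  The iterated integral of such a product of
   one-variable functions is the product of the one-variable integrals, and
   [int_0^1 a ^ s ds = (a - 1) / ln a = (x_i - x_k) / (c ln a_i)]; multiplying
   out gives the closed form. *)

Lemma prodR_ext (n : nat) (f g : nat -> R) :
  (forall i, (1 <= i <= n)%nat -> f i = g i) -> prodR n f = prodR n g.
Proof.
  induction n as [|n IH]; intros Hfg; simpl; [reflexivity|].
  rewrite IH by (intros; apply Hfg; lia).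
  rewrite Hfg by lia; reflexivity.
Qed.

Lemma prodR_neq0 (n : nat) (f : nat -> R) :
  (forall i, (1 <= i <= n)%nat -> f i <> 0) -> prodR n f <> 0.
Proof.
  induction n as [|n IH]; intros Hf; simpl; [lra|].
  apply Rmult_integral_contrapositive; split; [apply IH; intros|]; apply Hf; lia.
Qed.

Lemma prodR_const (n : nat) (c : R) : prodR n (fun _ => c) = c ^ n.
Proof.
  induction n as [|n IH]; simpl; [reflexivity|]. rewrite IH; ring.
Qed.

Lemma prodR_div (n : nat) (f g : nat -> R) :
  prodR n (fun i => f i / g i) = prodR n f / prodR n g.
Proof.
  induction n as [|n IH]; simpl; [field|].
  rewrite IH; unfold Rdiv; rewrite Rinv_mult; ring.
Qed.

Lemma Rpower_div (a c t : R) :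
  0 < a -> 0 < c -> Rpower (a / c) t = Rpower a t * Rpower c (- t).
Proof.
  intros Ha Hc; unfold Rpower.
  rewrite ln_div, <- exp_plus by assumption. f_equal; ring.
Qed.

Lemma prodR_Rpower_mul_Rpower_sub (n : nat) (a : nat -> R) (c u : R) (t : nat -> R) :
  0 < c -> (forall i, (1 <= i <= n)%nat -> 0 < a i) ->
  prodR n (fun i => Rpower (a i) (t i)) * Rpower c (u - sumR n t) =
  Rpower c u * prodR n (fun i => Rpower (a i / c) (t i)).
Proof.
  intros Hc. induction n as [|n IH]; intros Ha; simpl.
  - rewrite Rminus_0_r; ring.
  - replace (u - (sumR n t + t (S n))) with (u - sumR n t + - t (S n)) by ring.
    rewrite Rpower_plus, Rpower_div by (auto; apply Ha; lia).
    transitivity (prodR n (fun i => Rpower (a i) (t i)) * Rpower c (u - sumR n t) *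
                  (Rpower (a (S n)) (t (S n)) * Rpower c (- t (S n)))); [ring|].
    rewrite IH by (intros; apply Ha; lia). ring.
Qed.

Lemma iter_RInt_scal_prodR (n : nat) (g : nat -> R -> R) (l : nat -> R) (C : R) :
  (forall i, (1 <= i <= n)%nat -> is_RInt (g i) 0 1 (l i)) ->
  iter_RInt n (fun t => C * prodR n (fun i => g i (t i))) = C * prodR n l.
Proof.
  revert C. induction n as [|n IH]; intros C Hg; simpl; [reflexivity|].
  assert (Hslice : forall s,
    iter_RInt n (fun t => C *
      (prodR n (fun i => g i (if Nat.eqb i (S n) then s else t i)) *
       g (S n) (if Nat.eqb n n then s else t (S n))))
    = C * prodR n l * g (S n) s).
  { intros s. rewrite Nat.eqb_refl.
    transitivity (iter_RInt n (fun t => C * g (S n) s * prodR n (fun i => g i (t i)))).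
    - f_equal; apply functional_extensionality; intros t.
      rewrite (prodR_ext n _ (fun i => g i (t i))); [ring|].
      intros i Hi. replace (Nat.eqb i (S n)) with false by (symmetry; apply Nat.eqb_neq; lia).
      reflexivity.
    - rewrite IH by (intros; apply Hg; lia). ring. }
  rewrite (functional_extensionality _ _ Hslice), <- Rmult_assoc.
  apply is_RInt_unique, (is_RInt_scal (g (S n))), Hg; lia.
Qed.

Lemma is_RInt_Rpower_01 (a : R) :
  0 < a -> a <> 1 -> is_RInt (fun s => Rpower a s) 0 1 ((a - 1) / ln a).
Proof.
  intros Ha Ha1.
  assert (Hln : ln a <> 0) by (apply ln_neq_0; assumption).
  replace ((a - 1) / ln a) with (minus (Rpower a 1 / ln a) (Rpower a 0 / ln a)).
  2: { unfold minus, plus, opp; simpl. rewrite Rpower_1, Rpower_O by assumption.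
       field; assumption. }
  apply (is_RInt_derive (fun s => Rpower a s / ln a)); intros s _; unfold Rpower.
  - auto_derive; [exact I|]. field; assumption.
  - apply (@ex_derive_continuous R_AbsRing R_NormedModule). auto_derive; exact I.
Qed.

Theorem mainTheorem7 (k : nat) (x : nat -> R)
  (hk : (2 <= k)%nat)
  (hx : forall i, (1 <= i <= k)%nat -> 1 < x i)
  (hne : forall i, (1 <= i <= k - 1)%nat -> x i <> x k) :
  Mk k x =
  prodR (k - 1) (fun i => x i - x k) /
  ((x k - 1) ^ (k - 2) * prodR (k - 1) (fun i => ln ((x i - 1) / (x k - 1)))).
Proof.
  unfold Mk; set (c := x k - 1).
  assert (Hc : 0 < c) by (assert (1 < x k) by (apply hx; lia); unfold c; lra).
  assert (Ha : forall i, (1 <= i <= k - 1)%nat -> 0 < x i - 1)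
    by (intros i Hi; assert (1 < x i) by (apply hx; lia); lra).
  assert (Hr : forall i, (1 <= i <= k - 1)%nat -> 0 < (x i - 1) / c /\ (x i - 1) / c <> 1).
  { intros i Hi; split; [apply Rdiv_lt_0_compat; auto|].
    intros E; apply (hne i Hi).
    assert (Hxi : x i - 1 = (x i - 1) / c * c) by (field; lra).
    rewrite E, Rmult_1_l in Hxi; unfold c in Hxi; lra. }
  assert (Hln : forall i, (1 <= i <= k - 1)%nat -> ln ((x i - 1) / c) <> 0)
    by (intros i Hi; apply ln_neq_0; apply Hr; assumption).
  rewrite (functional_extensionality _ _ (fun t =>
    prodR_Rpower_mul_Rpower_sub (k - 1) (fun i => x i - 1) c 1 t Hc Ha)).
  rewrite Rpower_1 by assumption.
  rewrite (iter_RInt_scal_prodR (k - 1) (fun i s => Rpower ((x i - 1) / c) s)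
    (fun i => ((x i - 1) / c - 1) / ln ((x i - 1) / c)))
    by (intros i Hi; apply is_RInt_Rpower_01; apply Hr; assumption).
  rewrite (prodR_ext (k - 1) _ (fun i => ((x i - x k) / c) / ln ((x i - 1) / c)))
     by (intros i Hi; f_equal; unfold c in *; field; lra).
  assert (HL := prodR_neq0 (k - 1) _ Hln).
  rewrite !prodR_div, prodR_const.
  replace (c ^ (k - 1)) with (c * c ^ (k - 2))
    by (replace (k - 1)%nat with (S (k - 2)) by lia; reflexivity).
  field. split; [exact HL | split; [apply pow_nonzero|]; lra].
Qed.
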